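(* Let $a,c\in\mathbb{Z}$ with $c\neq 0$ and let $k,m,n\in\mathbb{N}$ with $km>n\ge 1$. Suppose $f(x)=(x^k+c)^m-ax^n\in\mathbb{Z}[x]$ is irreducible over $\mathbb{Q}$. Let $t=\gcd(n,k)$, $n=n_1t$, $k=k_1t$. Then $$\mathfrak{D}_f=(-1)^{\binom{km}{2}+(km+n+t)(m-1)}\,a^{k(m-1)}\,c^{m(n-1)}\left[(km)^{k_1m}c^{k_1m-n_1}-a^{k_1}n^{n_1}(km-n)^{k_1m-n_1}\right]^{t}.$$
   Context: $\mathfrak{D}_f$ denotes the discriminant of the monic polynomial $f(x)$ (degree $km$). The convention $0^0=1$ is used. *)

From HB Require Import structures.
From mathcomp Require Import all_boot all_order all_algebra all_field.
Set Implicit Arguments. Unset Strict Implicit. Unset Printing Implicit Defensive.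
Import Order.TTheory GRing.Theory Num.Theory.
Local Open Scope ring_scope.

Definition int_poly_roots (f : {poly int}) : seq algC :=
  sval (closed_field_poly_normal (map_poly (intr : int -> algC) f)).

(* Discriminant of a monic polynomial f with roots r_1..r_N (with multiplicity):
   D_f = prod_{i<j} (r_i - r_j)^2. *)
Definition disc (f : {poly int}) : algC :=
  let rs := int_poly_roots f in
  \prod_(i < size rs) \prod_(j < size rs | (i < j)%N) (rs`_i - rs`_j) ^+ 2.

From HB Require Import structures.
From mathcomp Require Import all_boot all_order all_algebra all_field.
From mathcomp Require Import ring zify.
Set Implicit Arguments. Unset Strict Implicit. Unset Printing Implicit Defensive.
Import Order.TTheory GRing.Theory Num.Theory.
Local Open Scope ring_scope.

(* For monic f with roots r_1, ..., r_N, D_f = (-1)^(N(N-1)/2) prod f'(r_i).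
   At a root r of f = (x^k + c)^m - a x^n we have (r^k + c)^m = a r^n, hence
     r (r^k + c) f'(r) = a r^n ((km - n) r^k - n c).
   The product of the roots is +-f(0), and the products of r^k + c and of
   (km - n) r^k - n c are, up to constants, resultants of f against x^k + c and
   x^k - w with w = n c / (km - n). By reciprocity they are evaluated over the
   k-th roots v of -c, resp. w, where f(v) = -a v^n, resp. (w + c)^m - a v^n.
   With W = (w + c)^m / a the last product becomes
     prod_(v^k = w) (W - v^n) = (W^(k/t) - w^(n/t))^t,
   which follows the subtractive Euclidean algorithm on (k, n). The case a = 0
   is direct, and irreducibility of f is not needed. *)

Section ProductsOverRoots.
Variable R : comNzRingType.
Implicit Types (rs vs : seq R) (x : R).

Lemma prodr_const_seq (I : Type) (s : seq I) x : \prod_(i <- s) x = x ^+ size s.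
Proof. by elim: s => [|i s IH]; rewrite ?big_nil ?big_cons ?IH ?exprS. Qed.

Lemma prodrN_seq (I : Type) (s : seq I) (F : I -> R) :
  \prod_(i <- s) - F i = (-1) ^+ size s * \prod_(i <- s) F i.
Proof.
by rewrite -prodr_const_seq -big_split; apply: eq_bigr => i _ /=; rewrite mulN1r.
Qed.

Lemma prodr_subC_swap rs x :
  \prod_(r <- rs) (x - r) = (-1) ^+ size rs * \prod_(r <- rs) (r - x).
Proof. by under eq_bigr do rewrite -opprB; exact: prodrN_seq. Qed.

Lemma horner_prod_XsubC rs x :
  (\prod_(r <- rs) ('X - r%:P)).[x] = \prod_(r <- rs) (x - r).
Proof. by rewrite horner_prod; apply: eq_bigr => r _; rewrite hornerXsubC. Qed.

Lemma prod_roots_horner0 rs :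
  \prod_(r <- rs) r = (-1) ^+ size rs * (\prod_(r <- rs) ('X - r%:P)).[0].
Proof. by rewrite horner_coef0 coef0_prod_XsubC mulrA -expr2 sqrr_sign mul1r. Qed.

Lemma prod_horner_prod_XsubC rs vs :
  \prod_(r <- rs) (\prod_(v <- vs) ('X - v%:P)).[r] =
  (-1) ^+ (size rs * size vs) * \prod_(v <- vs) (\prod_(r <- rs) ('X - r%:P)).[v].
Proof.
under eq_bigr => r _ do rewrite horner_prod_XsubC prodr_subC_swap.
rewrite big_split /= prodr_const_seq -exprM mulnC exchange_big /=.
by congr (_ * _); apply: eq_bigr => v _; rewrite horner_prod_XsubC.
Qed.

Lemma prod_roots_exp_subC (p : {poly R}) rs vs (k : nat) (w : R) : (0 < k)%N ->
  \prod_(r <- rs) ('X - r%:P) = p -> \prod_(v <- vs) ('X - v%:P) = 'X^k - w%:P ->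
  \prod_(r <- rs) (r ^+ k - w) = (-1) ^+ (size rs * k) * \prod_(v <- vs) p.[v].
Proof.
move=> k_gt0 p_roots w_roots.
have size_vs : size vs = k.
  by apply: succn_inj; rewrite -(size_prod_XsubC vs id) w_roots size_XnsubC.
rewrite -size_vs -p_roots -prod_horner_prod_XsubC.
by apply: eq_bigr => r _; rewrite w_roots !hornerE size_vs.
Qed.

Lemma prod_deriv_roots_XnaddC rs (k : nat) (C : R) : (0 < k)%N ->
  \prod_(r <- rs) ('X - r%:P) = 'X^k + C%:P ->
  \prod_(r <- rs) ('X^k + C%:P)^`().[r] = k%:R ^+ k * C ^+ k.-1.
Proof.
move=> k_gt0 C_roots.
have size_rs : size rs = k.
  by apply: succn_inj; rewrite -(size_prod_XsubC rs id) C_roots size_XnaddC.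
have prod_rs : \prod_(r <- rs) r = (-1) ^+ k * C.
  by rewrite prod_roots_horner0 C_roots size_rs !hornerE expr0n gtn_eqF // add0r.
under eq_bigr => r _ do rewrite derivD derivC addr0 derivXn hornerMn hornerXn -mulr_natl.
rewrite big_split /= prodr_const_seq prodrXl size_rs prod_rs exprMn -exprM.
by rewrite -signr_odd oddM; case: (k) => [|k'] /=; rewrite ?andNb mul1r.
Qed.

End ProductsOverRoots.

Section DiscriminantOfRoots.
Variable R : idomainType.
Implicit Types (rs : seq R) (x : R).

Definition disc_roots rs : R :=
  \prod_(i < size rs) \prod_(j < size rs | (i < j)%N) (rs`_i - rs`_j) ^+ 2.

Lemma disc_roots_cons x rs :
  disc_roots (x :: rs) = (\prod_(r <- rs) (x - r)) ^+ 2 * disc_roots rs.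
Proof.
rewrite /disc_roots /= big_ord_recl /=; congr (_ * _).
  rewrite big_mkcond big_ord_recl /= mul1r (big_nth 0) big_mkord -prodrXl.
  by apply: eq_bigr.
apply: eq_bigr => i _; rewrite big_mkcond big_ord_recl /= mul1r [RHS]big_mkcond.
by apply: eq_bigr.
Qed.

Lemma horner_deriv_prod_XsubC_cons x rs r : r \in rs ->
  (\prod_(z <- x :: rs) ('X - z%:P))^`().[r] =
  (r - x) * (\prod_(z <- rs) ('X - z%:P))^`().[r].
Proof.
move=> r_in; rewrite big_cons derivM derivXsubC mul1r hornerD hornerM hornerXsubC.
have /rootP -> : root (\prod_(z <- rs) ('X - z%:P)) r by rewrite root_prod_XsubC.
by rewrite add0r.
Qed.

Lemma disc_roots_deriv rs :
  disc_roots rs =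
  (-1) ^+ 'C(size rs, 2) * \prod_(r <- rs) (\prod_(z <- rs) ('X - z%:P))^`().[r].
Proof.
elim: rs => [|x rs IH]; first by rewrite /disc_roots !big_nil big_ord0 mulr1.
rewrite disc_roots_cons IH big_cons.
have -> : (\prod_(z <- x :: rs) ('X - z%:P))^`().[x] = \prod_(r <- rs) (x - r).
  by rewrite big_cons derivM derivXsubC mul1r !hornerE subrr mul0r addr0 horner_prod_XsubC.
rewrite (eq_big_seq _ (@horner_deriv_prod_XsubC_cons x rs)) big_split /=.
by rewrite prodr_subC_swap binS bin1 exprD; ring.
Qed.

End DiscriminantOfRoots.

Lemma odd_gcdn m n : odd (gcdn m n) = odd m || odd n.
Proof.
apply/idP/idP; last first.
  by case/orP; apply: dvdn_odd; [apply: dvdn_gcdl | apply: dvdn_gcdr].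
by apply: contraLR; rewrite negb_or -!dvdn2 => /andP[? ?]; rewrite dvdn_gcd; apply/andP.
Qed.

Section NthRoots.
Variable F : closedFieldType.
Implicit Types (rs us : seq F) (b w : F).

Lemma closed_monic_prod_XsubC (p : {poly F}) :
  p \is monic -> {rs | \prod_(r <- rs) ('X - r%:P) = p}.
Proof.
move=> /monicP p_monic; have [rs p_rs] := closed_field_poly_normal p.
by exists rs; rewrite [RHS]p_rs p_monic scale1r.
Qed.

Lemma XnsubC_roots n b rs : (0 < n)%N ->
  \prod_(s <- rs) ('X - s%:P) = 'X^n - b%:P ->
  size rs = n /\ {in rs, forall s, s ^+ n = b}.
Proof.
move=> n_gt0 rs_roots; split.
  by apply: succn_inj; rewrite -(size_prod_XsubC rs id) rs_roots size_XnsubC.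
move=> s s_in; apply/eqP; rewrite -subr_eq0.
by have := root_prod_XsubC rs s; rewrite s_in rs_roots /root !hornerE.
Qed.

Definition nth_roots_sub_exp_law n k := forall b w rs,
  \prod_(s <- rs) ('X - s%:P) = 'X^n - b%:P ->
  \prod_(s <- rs) (w - s ^+ k) =
  (w ^+ (n %/ gcdn n k) - b ^+ (k %/ gcdn n k)) ^+ gcdn n k.

Lemma nth_roots_sub_exp_law0 n : (0 < n)%N -> nth_roots_sub_exp_law n 0.
Proof.
move=> n_gt0 b w rs /(XnsubC_roots n_gt0)[size_rs _].
rewrite gcdn0 divnn n_gt0 div0n expr0 expr1.
by under eq_bigr do rewrite expr0; rewrite prodr_const_seq size_rs.
Qed.

Lemma nth_roots_sub_exp_lawD n k : (0 < n)%N ->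
  nth_roots_sub_exp_law n k -> nth_roots_sub_exp_law n (n + k).
Proof.
move=> n_gt0 law_nk b w rs rs_roots; have [size_rs rs_n] := XnsubC_roots n_gt0 rs_roots.
rewrite gcdnDl; set t := gcdn n k.
have t_dvd_n : (t %| n)%N := dvdn_gcdl n k.
have t_gt0 : (0 < t)%N by rewrite gcdn_gt0 n_gt0.
have n1_gt0 : (0 < n %/ t)%N by rewrite divn_gt0 // dvdn_leq.
have n_eq : n = (n %/ t * t)%N by rewrite divnK.
rewrite divnDl //.
have [b0 | b_neq0] := eqVneq b 0.
  have rs0 : {in rs, forall s, s = 0}.
    by move=> s /rs_n /eqP; rewrite b0 expf_eq0 n_gt0 => /eqP.
  rewrite (eq_big_seq (fun=> w)); last first.
    by move=> s /rs0 ->; rewrite expr0n addn_eq0 eqn0Ngt n_gt0 subr0.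
  rewrite prodr_const_seq size_rs b0 expr0n addn_eq0 eqn0Ngt n1_gt0 subr0.
  by rewrite -exprM -n_eq.
have -> : \prod_(s <- rs) (w - s ^+ (n + k)) = \prod_(s <- rs) (b * (w / b - s ^+ k)).
  by apply: eq_big_seq => s s_in; rewrite exprD rs_n //; field.
rewrite big_split /= prodr_const_seq size_rs (law_nk _ _ _ rs_roots) -/t.
by rewrite [in b ^+ n]n_eq exprM -exprMn mulrBr exprD -exprMn mulrC divfK.
Qed.

Lemma nth_roots_sub_exp_law_swap n k : (0 < n)%N -> (0 < k)%N ->
  nth_roots_sub_exp_law k n -> nth_roots_sub_exp_law n k.
Proof.
move=> n_gt0 k_gt0 law_kn b w rs rs_roots.
have [size_rs _] := XnsubC_roots n_gt0 rs_roots.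
have [us us_roots] := closed_monic_prod_XsubC (monicXnsubC w k_gt0).
have [size_us _] := XnsubC_roots k_gt0 us_roots.
have -> : \prod_(s <- rs) (w - s ^+ k) =
          (-1) ^+ (n + n * k + k) * \prod_(u <- us) (b - u ^+ n).
  under eq_bigr do rewrite -opprB.
  rewrite prodrN_seq (prod_roots_exp_subC k_gt0 rs_roots us_roots).
  rewrite size_rs (eq_bigr (fun u => - (b - u ^+ n))); last by move=> u _; rewrite !hornerE opprB.
  by rewrite prodrN_seq size_us !mulrA -!exprD.
rewrite (law_kn _ _ _ us_roots) gcdnC -opprB (exprNn (_ - _)) mulrA -exprD.
by rewrite -signr_odd !oddD oddM odd_gcdn; case: (odd n); case: (odd k); rewrite mul1r.
Qed.

Lemma prod_XnsubC_roots_sub_exp n k : (0 < n)%N -> nth_roots_sub_exp_law n k.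
Proof.
have [N] := ubnP (n + k); elim: N n k => // N IH n k lt_nk_N n_gt0.
have [-> | k_gt0] := posnP k; first exact: nth_roots_sub_exp_law0.
have [le_nk | lt_kn] := leqP n k.
  rewrite -(subnKC le_nk); apply: nth_roots_sub_exp_lawD => //.
  by apply: IH; lia.
apply: nth_roots_sub_exp_law_swap => //.
rewrite -(subnKC (ltnW lt_kn)); apply: nth_roots_sub_exp_lawD => //.
by apply: IH; lia.
Qed.

End NthRoots.

Lemma odd_trinomial_disc_sign k m n : (0 < m)%N -> (0 < n)%N ->
  odd (k * m * n) = odd ((k * m + n + gcdn n k) * (m - 1) + k * m + k + k * n).
Proof.
case: m => // m _; case: n => // n _; rewrite !subn1 /=.
rewrite !(oddD, oddM, oddS, odd_gcdn, mulnS, mulSn) /=.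
by case: (odd k); case: (odd m); case: (odd n).
Qed.

Section Trinomial.
Variable F : numClosedFieldType.
Variables (A C : F) (k m n : nat).
Hypotheses (C_neq0 : C != 0) (n_gt0 : (0 < n)%N) (n_lt_km : (n < k * m)%N).

Local Notation f := (('X^k + C%:P) ^+ m - A *: 'X^n).

Let k_gt0 : (0 < k)%N. Proof. by case: k n_lt_km => //; rewrite mul0n. Qed.
Let m_gt0 : (0 < m)%N. Proof. by case: m n_lt_km => //; rewrite muln0. Qed.

Let binom_monic : ('X^k + C%:P) ^+ m \is monic.
Proof. by rewrite monic_exp ?monicXnaddC. Qed.

Let size_binom : size (('X^k + C%:P) ^+ m) = (k * m).+1.
Proof.
have := size_exp ('X^k + C%:P) m; rewrite size_XnaddC //= => <-.
by rewrite prednK // size_poly_gt0 monic_neq0.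
Qed.

Let size_monomial_lt : (size (- (A *: 'X^n)) < size (('X^k + C%:P) ^+ m))%N.
Proof.
rewrite size_polyN size_binom ltnS.
by apply: leq_trans (size_scale_leq _ _) _; rewrite size_polyXn.
Qed.

Lemma size_trinomial : size f = (k * m).+1.
Proof. by rewrite size_polyDl. Qed.

Lemma trinomial_monic : f \is monic.
Proof. by rewrite monicE lead_coefDl // -monicE. Qed.

Lemma horner_deriv_trinomial x :
  f^`().[x] = m%:R * k%:R * x ^+ k.-1 * (x ^+ k + C) ^+ m.-1 - A * n%:R * x ^+ n.-1.
Proof.
rewrite derivB derivZ deriv_exp derivD !derivXn derivC addr0.
by rewrite !(hornerMn, hornerE); ring.
Qed.

Variable rs : seq F.
Hypothesis rs_roots : \prod_(r <- rs) ('X - r%:P) = f.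

Lemma size_trinomial_roots : size rs = (k * m)%N.
Proof. by apply: succn_inj; rewrite -(size_prod_XsubC rs id) rs_roots size_trinomial. Qed.

Lemma trinomial_rootE r : r \in rs -> (r ^+ k + C) ^+ m = A * r ^+ n.
Proof.
move=> r_in; apply/eqP; rewrite -subr_eq0.
by have := root_prod_XsubC rs r; rewrite r_in rs_roots /root !hornerE.
Qed.

Lemma prod_trinomial_roots : \prod_(r <- rs) r = (-1) ^+ (k * m) * C ^+ m.
Proof.
rewrite prod_roots_horner0 rs_roots size_trinomial_roots !hornerE !expr0n.
by rewrite !gtn_eqF // add0r mulr0 subr0.
Qed.

Lemma prod_trinomial_roots_addC :
  \prod_(r <- rs) (r ^+ k + C) = (-1) ^+ (k * m * k) * ((- A) ^+ k * ((-1) ^+ k * C) ^+ n).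
Proof.
have [us us_roots] := closed_monic_prod_XsubC (monicXnsubC (- C) k_gt0).
have [size_us us_k] := XnsubC_roots k_gt0 us_roots.
rewrite (eq_bigr (fun r => r ^+ k - (- C))); last by move=> r _; rewrite opprK.
rewrite (prod_roots_exp_subC k_gt0 rs_roots us_roots) size_trinomial_roots.
congr (_ * _); rewrite (eq_big_seq (fun u => - A * u ^+ n)); last first.
  by move=> u u_in; rewrite !hornerE us_k // addNr expr0n gtn_eqF // sub0r mulNr.
rewrite big_split /= prodr_const_seq prodrXl size_us prod_roots_horner0 us_roots.
by rewrite size_us !hornerE expr0n gtn_eqF // add0r opprK.
Qed.

Lemma trinomial_deriv_root r : r \in rs ->
  f^`().[r] * (r * (r ^+ k + C)) = A * r ^+ n * ((k * m - n)%:R * r ^+ k - n%:R * C).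
Proof.
move=> r_in; rewrite horner_deriv_trinomial natrB ?natrM 1?ltnW //.
have Xk : r ^+ k.-1 * r = r ^+ k by rewrite -exprSr prednK.
have Xn : r ^+ n.-1 * r = r ^+ n by rewrite -exprSr prednK.
have root_r : (r ^+ k + C) ^+ m.-1 * (r ^+ k + C) = A * r ^+ n.
  by rewrite -exprSr prednK // trinomial_rootE.
transitivity (m%:R * k%:R * (r ^+ k.-1 * r) * ((r ^+ k + C) ^+ m.-1 * (r ^+ k + C))
              - A * n%:R * (r ^+ n.-1 * r) * (r ^+ k + C)); first by ring.
by rewrite Xk Xn root_r; ring.
Qed.

Let t := gcdn n k.
Let n1 := (n %/ t)%N.
Let k1 := (k %/ t)%N.
Let L : F := (k * m - n)%:R.
Let B : F :=
  (k * m)%:R ^+ (k1 * m) * C ^+ (k1 * m - n1) - A ^+ k1 * n%:R ^+ n1 * L ^+ (k1 * m - n1).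

Let t_gt0 : (0 < t)%N. Proof. by rewrite gcdn_gt0 n_gt0. Qed.
Let k_eq : k = (k1 * t)%N. Proof. by rewrite divnK ?dvdn_gcdr. Qed.
Let n_eq : n = (n1 * t)%N. Proof. by rewrite divnK ?dvdn_gcdl. Qed.
Let L_neq0 : L != 0. Proof. by rewrite pnatr_eq0 subn_eq0 -ltnNge. Qed.

Lemma prod_trinomial_roots_affine_exp : A != 0 ->
  \prod_(r <- rs) (L * r ^+ k - n%:R * C) = (-1) ^+ (k * m * k) * (C ^+ n * B ^+ t).
Proof.
move=> A_neq0; set w := n%:R * C / L.
have [vs vs_roots] := closed_monic_prod_XsubC (monicXnsubC w k_gt0).
have [size_vs vs_k] := XnsubC_roots k_gt0 vs_roots.
have -> : \prod_(r <- rs) (L * r ^+ k - n%:R * C) = L ^+ (k * m) * \prod_(r <- rs) (r ^+ k - w).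
  rewrite -size_trinomial_roots -prodr_const_seq -big_split.
  by apply: eq_bigr => r _ /=; rewrite /w; field.
rewrite (prod_roots_exp_subC k_gt0 rs_roots vs_roots) size_trinomial_roots.
rewrite (eq_big_seq (fun v => A * ((w + C) ^+ m / A - v ^+ n))); last first.
  by move=> v v_in; rewrite !hornerE vs_k //; field.
rewrite big_split /= prodr_const_seq size_vs.
rewrite (prod_XnsubC_roots_sub_exp n k_gt0 _ vs_roots) gcdnC -/t -/n1 -/k1.
have base : L ^+ (k1 * m) * A ^+ k1 * (((w + C) ^+ m / A) ^+ k1 - w ^+ n1) = C ^+ n1 * B.
  have n1_le : (n1 <= k1 * m)%N.
    by rewrite -(leq_pmul2r t_gt0) -n_eq mulnAC -k_eq ltnW.
  have wC : w + C = (k * m)%:R * C / L.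
    have -> : (k * m)%:R = L + n%:R :> F by rewrite -natrD subnK // ltnW.
    by rewrite /w; field.
  have eC : C ^+ (k1 * m) = C ^+ n1 * C ^+ (k1 * m - n1) by rewrite -exprD subnKC.
  have eL : L ^+ (k1 * m) = L ^+ n1 * L ^+ (k1 * m - n1) by rewrite -exprD subnKC.
  rewrite wC /B /w !expr_div_n !exprMn -!exprM (mulnC m k1) eC eL.
  have a_neq0 : A ^+ k1 != 0 by rewrite expf_neq0.
  have l1_neq0 : L ^+ n1 != 0 by rewrite expf_neq0.
  have l2_neq0 : L ^+ (k1 * m - n1) != 0 by rewrite expf_neq0.
  (* Generalizing the powers keeps [field] from unfolding [L]. *)
  move: a_neq0 l1_neq0 l2_neq0; move: (A ^+ k1) (L ^+ n1) (L ^+ (k1 * m - n1)) => a l1 l2.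
  by move=> *; field; apply/and3P.
rewrite mulrCA; congr (_ * _).
have -> : L ^+ (k * m) = L ^+ (k1 * m) ^+ t by rewrite -exprM k_eq mulnAC.
have -> : A ^+ k = A ^+ k1 ^+ t by rewrite -exprM -k_eq.
have -> : C ^+ n = C ^+ n1 ^+ t by rewrite -exprM -n_eq.
by rewrite mulrA -!exprMn base.
Qed.

Lemma prod_deriv_trinomial_roots_neq0 : A != 0 ->
  \prod_(r <- rs) f^`().[r] =
  (-1) ^+ ((k * m + n + t) * (m - 1)) * A ^+ (k * (m - 1)) * C ^+ (m * (n - 1)) * B ^+ t.
Proof.
move=> A_neq0.
have key : \prod_(r <- rs) (f^`().[r] * (r * (r ^+ k + C))) =
           \prod_(r <- rs) (A * r ^+ n * (L * r ^+ k - n%:R * C)).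
  by apply: eq_big_seq => r; exact: trinomial_deriv_root.
rewrite !big_split /= prodr_const_seq prodrXl size_trinomial_roots prod_trinomial_roots in key.
rewrite prod_trinomial_roots_addC prod_trinomial_roots_affine_exp // in key.
have nz : (-1) ^+ (k * m) * C ^+ m *
          ((-1) ^+ (k * m * k) * ((- A) ^+ k * ((-1) ^+ k * C) ^+ n)) != 0.
  by rewrite !mulf_neq0 ?signr_eq0 ?expf_neq0 ?oppr_eq0 // mulf_neq0 ?signr_eq0.
apply: (mulIf nz); rewrite key.
have eA : A ^+ (k * m) = A ^+ (k * (m - 1)) * A ^+ k.
  by rewrite -exprD; congr (_ ^+ _); nia.
have eC : C ^+ (m * n) = C ^+ (m * (n - 1)) * C ^+ m.
  by rewrite -exprD; congr (_ ^+ _); nia.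
have sign : (-1) ^+ (k * m * n) = (-1) ^+ ((k * m + n + t) * (m - 1)) * (-1) ^+ (k * m)
                                  * (-1) ^+ k * (-1) ^+ (k * n) :> F.
  by rewrite -!exprD -signr_odd -[RHS]signr_odd odd_trinomial_disc_sign.
by rewrite (exprNn A) !exprMn -!exprM eA eC sign; ring.
Qed.

Lemma prod_deriv_trinomial_roots_eq0 : A = 0 -> (1 < m)%N -> \prod_(r <- rs) f^`().[r] = 0.
Proof.
move=> A_eq0 m_gt1; apply/eqP; rewrite prodf_seq_eq0; apply/hasP.
have rs_gt0 : (0 < size rs)%N by rewrite size_trinomial_roots muln_gt0 k_gt0.
exists rs`_0; first exact: mem_nth.
have /eqP : (rs`_0 ^+ k + C) ^+ m = 0 by rewrite trinomial_rootE ?mem_nth // A_eq0 mul0r.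
rewrite expf_eq0 m_gt0 /= => /eqP root0.
have m1_gt0 : (0 < m.-1)%N by rewrite -ltnS prednK.
by rewrite horner_deriv_trinomial root0 expr0n gtn_eqF // A_eq0 !mul0r mulr0 subr0.
Qed.

Lemma prod_deriv_trinomial_roots :
  \prod_(r <- rs) f^`().[r] =
  (-1) ^+ ((k * m + n + t) * (m - 1)) * A ^+ (k * (m - 1)) * C ^+ (m * (n - 1)) * B ^+ t.
Proof.
have [A_eq0 | A_neq0] := eqVneq A 0; last exact: prod_deriv_trinomial_roots_neq0.
have [m_gt1 | ] := ltnP 1 m.
  have km1_gt0 : (0 < k * (m - 1))%N by rewrite muln_gt0 k_gt0 subn_gt0.
  by rewrite prod_deriv_trinomial_roots_eq0 // A_eq0 expr0n gtn_eqF // mulr0 !mul0r.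
move=> m_le1; have m_eq1 : m = 1%N by apply/anti_leq/andP.
have rs_roots1 : \prod_(r <- rs) ('X - r%:P) = 'X^k + C%:P.
  by rewrite rs_roots A_eq0 scale0r subr0 m_eq1 expr1.
rewrite /B A_eq0 m_eq1 scale0r subr0 expr1 (prod_deriv_roots_XnaddC k_gt0 rs_roots1).
have k1_gt0 : (0 < k1)%N by move: k_gt0; rewrite k_eq muln_gt0 => /andP[].
rewrite subnn !muln0 !muln1 mul1n !expr0 !mul1r expr0n gtn_eqF // !mul0r subr0.
rewrite exprMn -!exprM mulnBl -k_eq -n_eq mulrCA -exprD; congr (_ * _ ^+ _).
by move: n_lt_km; rewrite m_eq1; lia.
Qed.

End Trinomial.

Theorem mainTheorem1 (a c : int) (k m n : nat) :
  c != 0 -> (1 <= n)%N -> (n < k * m)%N ->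
  let f : {poly int} := ('X^k + c%:P) ^+ m - a *: 'X^n in
  irreducible_poly (map_poly (intr : int -> rat) f) ->
  let t := gcdn n k in
  let n1 := (n %/ t)%N in
  let k1 := (k %/ t)%N in
  disc f =
    ((-1) ^+ ('C(k * m, 2) + (k * m + n + t) * (m - 1))
     * a ^+ (k * (m - 1)) * c ^+ (m * (n - 1))
     * (((k * m)%:Z) ^+ (k1 * m) * c ^+ (k1 * m - n1)
        - a ^+ k1 * (n%:Z) ^+ n1 * (((k * m - n)%N)%:Z) ^+ (k1 * m - n1)) ^+ t
     : int)%:~R.
Proof.
move=> c_neq0 n_gt0 n_lt_km f _ t n1 k1.
have c_alg_neq0 : c%:~R != 0 :> algC by rewrite intr_eq0.
have f_alg : map_poly intr f = ('X^k + (c%:~R)%:P) ^+ m - a%:~R *: 'X^n :> {poly algC}.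
  by rewrite rmorphB rmorphXn rmorphD /= map_polyZ !map_polyXn map_polyC.
rewrite /disc /int_poly_roots; case: closed_field_poly_normal => rs /=.
rewrite f_alg (monicP (trinomial_monic _ _ n_lt_km)) scale1r => /esym rs_roots.
rewrite -/(disc_roots rs) disc_roots_deriv rs_roots (size_trinomial_roots n_lt_km rs_roots).
rewrite (prod_deriv_trinomial_roots c_alg_neq0 n_gt0 n_lt_km rs_roots).
rewrite !(rmorphM, rmorphB, rmorphXn, rmorphN1) exprD -!mulrA /=.
by rewrite -!pmulrn -natrM.
Qed.
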